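(* Let $G$ be a graph and let $X,Y\subset V(G)$. Suppose that $X$ is $\alpha$-cut-linked in $G$ for some $\alpha>0$, and that there exists a collection $\mathcal{Q}$ of pairwise vertex-disjoint paths in $G$ between $X$ and $Y$ with $|\mathcal{Q}|=|Y|$. Then $Y$ is $\min\{1/2,\alpha/2\}$-cut-linked in $G$.
   Context: A set $X\subseteq V(G)$ is $\alpha$-cut-linked in $G$ if for every partition of $V(G)$ into $\{A,B\}$ we have $|E(A,B)|\geq\alpha\cdot\min\{|A\cap X|,|B\cap X|\}$, where $E(A,B)$ is the set of edges between $A$ and $B$. *)

From mathcomp Require Import all_boot all_order all_algebra.
Set Implicit Arguments. Unset Strict Implicit. Unset Printing Implicit Defensive.
Import Order.TTheory GRing.Theory Num.Theory.
Local Open Scope ring_scope.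

Definition simple_graph (T : finType) (e : rel T) : Prop :=
  symmetric e /\ irreflexive e.

(* |E(A,B)| : number of edges with one end in A and the other in B
   (for disjoint A, B each such edge is counted exactly once as the
   ordered pair (a, b) with a in A, b in B). *)
Definition cut_size (T : finType) (e : rel T) (A B : {set T}) : nat :=
  #|[set p : T * T | [&& p.1 \in A, p.2 \in B & e p.1 p.2]]|.

Definition cut_linked (R : realFieldType) (T : finType) (e : rel T)
  (alpha : R) (X : {set T}) : Prop :=
  forall A : {set T},
    (alpha * (minn #|A :&: X| #|(~: A) :&: X|)%:R <= (cut_size e A (~: A))%:R)%R.

Definition is_path (T : finType) (e : rel T) (p : seq T) : Prop :=
  exists x q, p = x :: q /\ path e x q /\ uniq p.

Definition XY_path (T : finType) (e : rel T) (X Y : {set T}) (p : seq T) : Prop :=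
  is_path e p /\ (exists x q, p = x :: q /\ x \in X /\ last x q \in Y).

Definition disjoint_paths (T : finType) (Q : seq (seq T)) : Prop :=
  uniq Q /\ forall i j, (i < size Q)%N -> (j < size Q)%N -> i <> j ->
    [disjoint (nth [::] Q i) & (nth [::] Q j)].

From mathcomp Require Import all_boot all_order all_algebra.
From mathcomp Require Import zify lra.
Import Order.TTheory GRing.Theory Num.Theory.
Local Open Scope ring_scope.

Set Implicit Arguments.
Unset Strict Implicit.

(* Fix a cut (A, ~A) and call a path of Q crossing if it meets both sides.
   As |Q| = |Y| and the paths are disjoint, their last vertices are exactly Y,
   so each vertex of A ∩ Y ends a path that starts in A ∩ X or crosses; the
   first vertices being distinct, |A ∩ Y| <= |A ∩ X| + c, and likewise for ~A,
   where c is the number of crossing paths.  Each crossing path contains a cut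
   edge, and disjoint paths contain distinct ones, so c <= |E(A, ~A)|; hence
   min(1/2, alpha/2) * min(|A ∩ Y|, |~A ∩ Y|)
     <= (alpha * min(|A ∩ X|, |~A ∩ X|) + c) / 2 <= |E(A, ~A)|. *)

Lemma leq_size_card_witness (I : eqType) (U : finType) (s : seq I)
    (C : {set U}) (P : I -> U -> bool) :
  uniq s -> (forall i, i \in s -> exists2 w, w \in C & P i w) ->
  (forall i j w, i \in s -> j \in s -> P i w -> P j w -> i = j) ->
  (size s <= #|C|)%N.
Proof.
move=> s_uniq s_wit P_inj.
pose f i := [pick w in C | P i w].
have fP i : i \in s -> exists2 w, f i = Some w & (w \in C) && P i w.
  move=> /s_wit[w wC Piw]; rewrite /f.
  by case: pickP => [w' Hw'|/(_ w)]; [exists w' | rewrite wC Piw].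
rewrite -(size_map f) cardE -(size_map Some (enum C)); apply: uniq_leq_size.
  rewrite map_inj_in_uniq // => i j si sj.
  case/fP: (si) => w -> /andP[_ Piw]; case/fP: (sj) => w' -> /andP[_ Pjw'].
  by case=> ww'; apply: (P_inj i j w) => //; rewrite ww'.
by move=> _ /mapP[i /fP[w -> /andP[wC _]] ->]; rewrite map_f ?mem_enum.
Qed.

Section CutsAndPaths.
Variables (T : finType) (e : rel T).

Definition crosses (S : {set T}) (p : seq T) :=
  has (mem S) p && has [predC S] p.

Lemma crossesC (S : {set T}) (p : seq T) : crosses (~: S) p = crosses S p.
Proof.
rewrite /crosses andbC.
by congr (_ && _); apply: eq_has => v; rewrite /= inE ?negbK.
Qed.

Lemma last_in_head_or_crosses (S : {set T}) (x0 : T) (p : seq T) :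
  last x0 p \in S -> (head x0 p \in S) || crosses S p.
Proof.
case: p => [/= -> //|x q /= lastS]; case: (boolP (x \in S)) => //= xNS.
apply/andP; split; apply/hasP; first by exists (last x q); rewrite ?mem_last.
by exists x; rewrite ?mem_head.
Qed.

Lemma path_cut_edge (A : {set T}) (x : T) (q : seq T) :
  symmetric e -> path e x q ->
  has (mem A) (x :: q) -> has [predC A] (x :: q) ->
  exists u v, [/\ u \in x :: q, u \in A, v \notin A & e u v].
Proof.
move=> e_sym; elim: q x => [|y q IH] x /=.
  by rewrite !orbF => _ ->.
move=> /andP[exy yq]; have [Exy|Nxy] := eqVneq (x \in A) (y \in A).
  rewrite Exy !orbA !orbb => hA hC.
  have [u [v [uq uA vA euv]]] := IH y yq hA hC.
  by exists u, v; rewrite inE uq orbT.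
case: (boolP (x \in A)) Nxy => xA; case: (boolP (y \in A)) => yA //= _.
  by exists x, y; rewrite mem_head.
by exists y, x; rewrite !inE eqxx orbT e_sym.
Qed.

Lemma disjoint_paths_eq (Q : seq (seq T)) (p p' : seq T) (v : T) :
  disjoint_paths Q -> p \in Q -> p' \in Q -> v \in p -> v \in p' -> p = p'.
Proof.
move=> [_ Q_disj] pQ p'Q vp vp'.
have [//|Npp'] := eqVneq p p'.
have Nidx : index p Q <> index p' Q.
  by move/(congr1 (nth [::] Q)); rewrite !nth_index //; apply/eqP.
have := Q_disj _ _ _ _ Nidx; rewrite !index_mem !nth_index // => /(_ pQ p'Q).
by move/disjointFr/(_ vp); rewrite vp'.
Qed.

Lemma count_crosses_le_cut (Q : seq (seq T)) (A : {set T}) :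
  symmetric e -> (forall p, p \in Q -> is_path e p) -> disjoint_paths Q ->
  (count (crosses A) Q <= cut_size e A (~: A))%N.
Proof.
move=> e_sym Q_paths Q_disj; rewrite -size_filter /cut_size.
apply: (@leq_size_card_witness _ _ _ _ (fun (p : seq T) (uv : T * T) => uv.1 \in p)).
- by rewrite filter_uniq //; case: Q_disj.
- move=> p; rewrite mem_filter => /andP[/andP[hA hC] /Q_paths[x [q [Ep [xq _]]]]].
  rewrite {}Ep in hA hC *.
  have [u [v [uq uA vA euv]]] := path_cut_edge e_sym xq hA hC.
  by exists (u, v); rewrite // !inE uA vA euv.
- move=> p p' uv; rewrite !mem_filter => /andP[_ pQ] /andP[_ p'Q].
  exact: disjoint_paths_eq Q_disj pQ p'Q.
Qed.

Section LinkingPaths.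
Variables (X Y : {set T}) (Q : seq (seq T)) (x0 : T).
Hypotheses (Q_XY : forall p, p \in Q -> XY_path e X Y p)
  (Q_disj : disjoint_paths Q).

Lemma uniq_map_select (f : seq T -> T) :
  (forall p, p \in Q -> f p \in p) -> uniq (map f Q).
Proof.
move=> fP; have [Q_uniq _] := Q_disj.
rewrite map_inj_in_uniq // => p p' pQ p'Q Ef.
by apply: (disjoint_paths_eq Q_disj pQ p'Q (fP p pQ)); rewrite Ef fP.
Qed.

Lemma head_XY_path p : p \in Q -> head x0 p \in p /\ head x0 p \in X.
Proof. by move/Q_XY=> [_ [x [q [-> [xX _]]]]]; rewrite mem_head. Qed.

Lemma last_XY_path p : p \in Q -> last x0 p \in p /\ last x0 p \in Y.
Proof. by move/Q_XY=> [_ [x [q [-> [_ lY]]]]]; rewrite /= mem_last. Qed.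

Lemma count_head_le (S : {set T}) :
  (count (fun p => head x0 p \in S) Q <= #|S :&: X|)%N.
Proof.
rewrite -(count_map _ (mem S)) -size_filter cardE; apply: uniq_leq_size.
  by rewrite filter_uniq // uniq_map_select // => p /head_XY_path[].
move=> y; rewrite mem_filter mem_enum in_setI.
by case/andP=> yS /mapP[p /head_XY_path[_ pX] Ey]; apply/andP; rewrite Ey in yS *.
Qed.

Hypothesis Q_size : size Q = #|Y|.

Lemma count_last_eq (S : {set T}) :
  count (fun p => last x0 p \in S) Q = #|S :&: Y|.
Proof.
have lasts_uniq : uniq (map (last x0) Q).
  by rewrite uniq_map_select // => p /last_XY_path[].
have lasts_sub : {subset map (last x0) Q <= enum Y}.
  by move=> _ /mapP[p /last_XY_path[_ lY] ->]; rewrite mem_enum.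
have [|_ lastsY] := uniq_min_size lasts_uniq lasts_sub.
  by rewrite size_map Q_size cardE.
rewrite -(count_map _ (mem S)) -size_filter cardE.
apply/perm_size/uniq_perm => [|| y]; [exact: filter_uniq | exact: enum_uniq |].
by rewrite mem_filter !mem_enum in_setI lastsY mem_enum.
Qed.

Lemma card_side_le (S : {set T}) :
  (#|S :&: Y| <= #|S :&: X| + count (crosses S) Q)%N.
Proof.
rewrite -count_last_eq; apply: leq_trans (leq_add (count_head_le S) (leqnn _)).
rewrite -count_predUI; apply: leq_trans (leq_addr _ _).
by apply: sub_count => p; apply: last_in_head_or_crosses.
Qed.

End LinkingPaths.
End CutsAndPaths.

Lemma mul_min_half_le (R : realFieldType) (alpha : R) (m M c k : nat) :
  0 <= alpha -> (m <= M + c)%N -> alpha * M%:R <= k%:R -> (c <= k)%N ->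
  Num.min (1 / 2) (alpha / 2) * m%:R <= k%:R.
Proof.
move=> alpha_ge0 mMc aMk ck.
have half : Num.min (1 / 2) (alpha / 2) <= 1 / 2 by rewrite ge_min lexx.
have half_alpha : Num.min (1 / 2) (alpha / 2) <= alpha / 2.
  by rewrite ge_min lexx orbT.
have min_ge0 : 0 <= Num.min (1 / 2) (alpha / 2).
  by rewrite le_min; apply/andP; split; lra.
have : m%:R <= M%:R + c%:R :> R by rewrite -natrD ler_nat.
have : c%:R <= k%:R :> R by rewrite ler_nat.
have : 0 <= M%:R :> R by [].
have : 0 <= c%:R :> R by [].
nra.
Qed.

Theorem lemma11 (R : realFieldType) (T : finType) (e : rel T)
  (X Y : {set T}) (alpha : R) (Q : seq (seq T)) :
  simple_graph e ->
  0 < alpha ->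
  cut_linked e alpha X ->
  (forall p, p \in Q -> XY_path e X Y p) ->
  disjoint_paths Q ->
  size Q = #|Y| ->
  cut_linked e (Num.min (1 / 2) (alpha / 2)) Y.
Proof.
move=> [e_sym _] /ltW alpha_ge0 X_linked Q_XY Q_disj Q_size A.
have [Y0|[x0 _]] := set_0Vmem Y.
  by rewrite Y0 !setI0 cards0 min0n mulr0.
have Q_paths p : p \in Q -> is_path e p by case/Q_XY.
apply: (mul_min_half_le alpha_ge0 _ (X_linked A)
          (count_crosses_le_cut A e_sym Q_paths Q_disj)).
have sideA := card_side_le x0 Q_XY Q_disj Q_size A.
have sideNA := card_side_le x0 Q_XY Q_disj Q_size (~: A).
rewrite (eq_count (crossesC A)) in sideNA.
lia.
Qed.
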